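(* Let $b\ge 2$ and $m\ge 1$ be integers. Let $\mathcal P_0,\ldots,\mathcal P_{b-1}$ be (not necessarily distinct) $(0,m-1,2)$-nets in base $b$, each contained in $\mathbb Q(b^{m-1})\times\mathbb Q(b^{m-1})$, and let $\pi_0,\ldots,\pi_{b^{m-1}-1}$ be permutations of $\{0,1,\ldots,b-1\}$. Put $\widehat{\mathcal P}=\bigcup_{j=0}^{b-1}A_b(\mathcal P_j+(j,0))$, where $A_b(x,y)=(x/b,y)$, and $\mathcal P=\psi_{b,m}(\widehat{\mathcal P})$, where $\psi_{b,m}:\mathbb Q(b^m)\times\mathbb Q(b^{m-1})\to\mathbb Q(b^m)\times\mathbb Q(b^m)$ is given by $\psi_{b,m}(x,y)=\left(x,\,y+\pi_{b^{m-1}y}(\lfloor bx\rfloor)\,b^{-m}\right)$. Then $\mathcal P$ is a $(0,m,2)$-net in base $b$.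
   Context: For $k\ge 0$, $\mathbb Q(b^k)=\{0,\frac{1}{b^k},\frac{2}{b^k},\ldots,\frac{b^k-1}{b^k}\}$. An elementary $b$-adic interval in $[0,1)^2$ is a set $\prod_{j=1}^2\left[\frac{a_j}{b^{d_j}},\frac{a_j+1}{b^{d_j}}\right)$ with $d_j\in\mathbb N_0$ and $a_j\in\{0,1,\ldots,b^{d_j}-1\}$; its volume is $b^{-(d_1+d_2)}$. For integers $0\le t\le m$, a $b^m$-element point set in $[0,1)^s$ is a $(t,m,s)$-net in base $b$ if every elementary $b$-adic interval of volume $b^{t-m}$ contains exactly $b^t$ of its points. For $\mathcal P\subseteq\mathbb R^2$ and $v\in\mathbb R^2$, $\mathcal P+v=\{p+v:p\in\mathcal P\}$. *)

From HB Require Import structures.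
From mathcomp Require Import all_boot all_order all_fingroup all_algebra.
Set Implicit Arguments. Unset Strict Implicit. Unset Printing Implicit Defensive.
Import Order.TTheory GRing.Theory Num.Theory.
Local Open Scope ring_scope.

Definition point := (rat * rat)%type.

Definition in_Qgrid (b k : nat) (x : rat) : Prop :=
  exists a : nat, (a < b ^ k)%N /\ x = a%:R / (b ^ k)%:R.

Definition in_elem_interval (b d1 d2 a1 a2 : nat) (p : point) : bool :=
  (a1%:R / (b ^ d1)%:R <= p.1) && (p.1 < a1.+1%:R / (b ^ d1)%:R) &&
  (a2%:R / (b ^ d2)%:R <= p.2) && (p.2 < a2.+1%:R / (b ^ d2)%:R).

Definition in_unit_square (p : point) : Prop :=
  0 <= p.1 < 1 /\ 0 <= p.2 < 1.

(* (t,m,2)-net in base b: b^m points in [0,1)^2, every elementary b-adic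
   interval of volume b^(t-m) (i.e. d1 + d2 = m - t) contains exactly b^t
   points (counted with multiplicity). *)
Definition is_net2 (b t m : nat) (P : seq point) : Prop :=
  (t <= m)%N /\ size P = (b ^ m)%N /\ (forall p, p \in P -> in_unit_square p) /\
  forall d1 d2 a1 a2 : nat, (d1 + d2 = m - t)%N -> (a1 < b ^ d1)%N -> (a2 < b ^ d2)%N ->
    count (in_elem_interval b d1 d2 a1 a2) P = (b ^ t)%N.

Definition perm_app (b : nat) (s : {perm 'I_b}) (k : nat) : nat :=
  match @insub nat (fun k => (k < b)%N) 'I_b k with
  | Some i => val (s i)
  | None => k
  end.

Definition Phat (b : nat) (Ps : nat -> seq point) : seq point :=
  flatten [seq [seq (((p.1 + j%:R) / b%:R), p.2) | p <- Ps j] | j <- iota 0 b].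

Definition psi (b m : nat) (pi : nat -> {perm 'I_b}) (p : point) : point :=
  (p.1, p.2 + (perm_app (pi `|Num.floor ((b ^ m.-1)%:R * p.2)|%N)
                         `|Num.floor (b%:R * p.1)|%N)%:R / (b ^ m)%:R).
Arguments psi : clear implicits.
Arguments perm_app : clear implicits.
Arguments Phat : clear implicits.
Arguments is_net2 : clear implicits.

(* Points of Q(b^n)^2 are coded by integer coordinates (X, Y) in [0, b^n)^2,
   and lying in an elementary interval means having prescribed leading base-b
   digits X %/ b^(n-d1) and Y %/ b^(n-d2).  Shrinking the j-th net and applying
   psi sends (X, Y) to (X + j b^n, b Y + pi_Y(j)).  For an interval with
   d1 = e + 1 the leading digit of the first coordinate is j; for d1 = 0 the
   last digit of the second coordinate is pi_Y(j), which determines j because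
   pi_Y is a permutation.  Either way the interval selects one net P_j and,
   within it, one elementary interval of volume b^(1-m), which holds exactly
   one point. *)

From HB Require Import structures.
From mathcomp Require Import all_boot all_order all_fingroup all_algebra.
From mathcomp Require Import ring.
Set Implicit Arguments.
Unset Strict Implicit.
Unset Printing Implicit Defensive.
Import Order.TTheory GRing.Theory Num.Theory.
Local Open Scope ring_scope.

Section PermApp.
Local Open Scope nat_scope.
Variables (b : nat) (s : {perm 'I_b}).

Lemma perm_appE j (lt_jb : j < b) : perm_app b s j = val (s (Ordinal lt_jb)).
Proof.
rewrite /perm_app; case: insubP => [i _ vi|]; last by rewrite lt_jb.
by congr (val (s _)); apply: val_inj.
Qed.

Lemma perm_app_lt j : j < b -> perm_app b s j < b.
Proof. by move=> lt_jb; rewrite (perm_appE lt_jb) ltn_ord. Qed.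

Lemma perm_app_eq_inv j r (lt_rb : r < b) : j < b ->
  (perm_app b s j == r) = (j == val ((s^-1)%g (Ordinal lt_rb))).
Proof.
move=> lt_jb; rewrite (perm_appE lt_jb) -[RHS]/(Ordinal lt_jb == _).
by rewrite -(inj_eq (@perm_inj _ s)) permKV.
Qed.

End PermApp.

Section NatNets.
Local Open Scope nat_scope.

Lemma eq_divmod B j w a : w < B -> (j * B + w == a) = (j == a %/ B) && (w == a %% B).
Proof.
move=> lt_wB; have B_gt0 : 0 < B by apply: leq_ltn_trans lt_wB.
apply/eqP/andP => [<-|[/eqP -> /eqP ->]]; last by rewrite -divn_eq.
by rewrite divnMDl // modnMDl (divn_small lt_wB) (modn_small lt_wB) addn0.
Qed.

Lemma count_flatten_iota_pred1 (T : eqType) (U : Type) (a : pred U) (c : pred T)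
    (f : nat -> T -> U) (Q : nat -> seq T) n j0 :
  j0 < n -> (forall j, j < n -> {in Q j, forall q, a (f j q) = (j == j0) && c q}) ->
  count a (flatten [seq map (f j) (Q j) | j <- iota 0 n]) = count c (Q j0).
Proof.
move=> lt_j0n af.
have countE j : j < n -> count a (map (f j) (Q j)) = (j == j0) * count c (Q j).
  move=> lt_jn; rewrite count_map (eq_in_count (af j lt_jn)).
  by case: eqP => _; [rewrite mul1n | exact: count_pred0].
rewrite count_flatten -map_comp sumnE big_map.
rewrite (bigD1_seq j0) ?mem_iota ?iota_uniq //= countE // eqxx mul1n.
rewrite big1_seq ?addn0 // => j /andP[ne_jj0]; rewrite mem_iota add0n => /= lt_jn.
by rewrite countE // (negbTE ne_jj0).
Qed.

Variable b : nat.

Definition in_nat_box (n d1 d2 a1 a2 : nat) (q : nat * nat) : bool :=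
  (q.1 %/ b ^ (n - d1) == a1) && (q.2 %/ b ^ (n - d2) == a2).

Definition nat_net (n : nat) (Q : seq (nat * nat)) : Prop :=
  [/\ size Q = b ^ n, {in Q, forall q, q.1 < b ^ n /\ q.2 < b ^ n} &
      forall d1 d2 a1 a2, d1 + d2 = n -> a1 < b ^ d1 -> a2 < b ^ d2 ->
        count (in_nat_box n d1 d2 a1 a2) Q = 1].

Variables (n : nat) (pi : nat -> {perm 'I_b}).

Definition lift_pt (j : nat) (q : nat * nat) : nat * nat :=
  (q.1 + j * b ^ n, b * q.2 + perm_app b (pi q.2) j).

Hypothesis b_gt0 : 0 < b.

Lemma lift_pt1_lt j q : j < b -> q.1 < b ^ n -> (lift_pt j q).1 < b ^ n.+1.
Proof.
move=> lt_jb lt_q1; rewrite expnS /=.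
apply: (@leq_trans (j.+1 * b ^ n)); first by rewrite mulSn ltn_add2r.
by rewrite leq_mul2r lt_jb orbT.
Qed.

Lemma lift_pt2_lt j q : j < b -> q.2 < b ^ n -> (lift_pt j q).2 < b ^ n.+1.
Proof.
move=> lt_jb lt_q2; rewrite expnS /=.
apply: (@leq_trans (b * q.2.+1)); last by rewrite leq_mul2l lt_q2 orbT.
by rewrite mulnS addnC ltn_add2r perm_app_lt.
Qed.

Lemma in_nat_box_lift_col0 a2 j q : j < b -> q.1 < b ^ n ->
  in_nat_box n.+1 0 n.+1 0 a2 (lift_pt j q) =
  (j == val ((pi (a2 %/ b))^-1 (Ordinal (ltn_pmod a2 b_gt0)))%g) &&
  in_nat_box n 0 n 0 (a2 %/ b) q.
Proof.
move=> lt_jb lt_q1; rewrite /in_nat_box !subn0 !subnn !divn1.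
rewrite (divn_small (lift_pt1_lt lt_jb lt_q1)) (divn_small lt_q1) /=.
rewrite mulnC eq_divmod ?perm_app_lt //.
case: (eqVneq q.2 (a2 %/ b)) => [->|]; rewrite ?andbF // andbT.
by rewrite (perm_app_eq_inv _ (ltn_pmod a2 b_gt0)).
Qed.

Lemma in_nat_box_lift_succ e d2 a1 a2 j q : e + d2 = n -> j < b -> q.1 < b ^ n ->
  in_nat_box n.+1 e.+1 d2 a1 a2 (lift_pt j q) =
  (j == a1 %/ b ^ e) && in_nat_box n e d2 (a1 %% b ^ e) a2 q.
Proof.
move=> ed2n lt_jb lt_q1.
have le_en : e <= n by rewrite -ed2n leq_addr.
have le_d2n : d2 <= n by rewrite -ed2n leq_addl.
rewrite /in_nat_box subSS (subSn le_d2n) expnS divnMA /= [b * q.2]mulnC.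
rewrite divnMDl // (divn_small (perm_app_lt _ lt_jb)) addn0.
have -> : q.1 + j * b ^ n = (j * b ^ e) * b ^ (n - e) + q.1.
  by rewrite addnC -mulnA -expnD subnKC.
rewrite divnMDl ?expn_gt0 ?b_gt0 // eq_divmod ?andbA //.
by rewrite ltn_divLR ?expn_gt0 ?b_gt0 // -expnD addnC subnK.
Qed.

Lemma nat_net_lift (Q : nat -> seq (nat * nat)) :
  (forall j, j < b -> nat_net n (Q j)) ->
  nat_net n.+1 (flatten [seq map (lift_pt j) (Q j) | j <- iota 0 b]).
Proof.
move=> netQ; split.
- rewrite size_flatten /shape -map_comp sumnE big_map big_seq.
  rewrite (eq_bigr (fun=> b ^ n)) -?big_seq ?big_const_seq ?count_predT ?size_iota.
    by rewrite iter_addn_0 expnS mulnC.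
  by move=> j; rewrite mem_iota add0n => /= lt_jb; rewrite size_map; case: (netQ j lt_jb).
- move=> p /flattenP[s /mapP[j]]; rewrite mem_iota add0n => /= lt_jb -> /mapP[q Qq ->].
  have [_ boundQ _] := netQ j lt_jb; have [lt_q1 lt_q2] := boundQ q Qq.
  by rewrite lift_pt1_lt ?lift_pt2_lt.
move=> [|e] d2 a1 a2 /= d12n lt_a1 lt_a2.
- have a1_0 : a1 = 0 by move: lt_a1; rewrite expn0; case: a1.
  rewrite add0n in d12n; subst d2 a1.
  have lt_a2b : a2 %/ b < b ^ n by rewrite ltn_divLR // -expnSr.
  pose j0 := ((pi (a2 %/ b))^-1 (Ordinal (ltn_pmod a2 b_gt0)))%g.
  rewrite (@count_flatten_iota_pred1 _ _ _ (in_nat_box n 0 n 0 (a2 %/ b)) _ _ _ j0) //.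
    by have [_ _ ->] := netQ _ (ltn_ord j0).
  move=> j lt_jb q Qq; have [_ boundQ _] := netQ j lt_jb.
  exact: in_nat_box_lift_col0 (boundQ q Qq).1.
- rewrite addSn in d12n; case: d12n => ed2n.
  have lt_j0 : a1 %/ b ^ e < b by rewrite ltn_divLR ?expn_gt0 ?b_gt0 // -expnS.
  rewrite (@count_flatten_iota_pred1 _ _ _ (in_nat_box n e d2 (a1 %% b ^ e) a2)
             _ _ _ (a1 %/ b ^ e)) //.
    by have [_ _ ->] := netQ _ lt_j0; rewrite ?ltn_pmod ?expn_gt0 ?b_gt0.
  move=> j lt_jb q Qq; have [_ boundQ _] := netQ j lt_jb.
  exact: in_nat_box_lift_succ (boundQ q Qq).1.
Qed.

End NatNets.

Definition grid_pt (b n : nat) (q : nat * nat) : point :=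
  (q.1%:R / (b ^ n)%:R, q.2%:R / (b ^ n)%:R).

Definition grid_index (b n : nat) (x : rat) : nat := `|Num.floor ((b ^ n)%:R * x)|%N.

Definition grid_coords (b n : nat) (p : point) : nat * nat :=
  (grid_index b n p.1, grid_index b n p.2).

Section Grid.
Variables (b : nat).
Hypothesis b_gt0 : (0 < b)%N.

Let expn_neq0 k : (b ^ k)%:R != 0 :> rat.
Proof. by rewrite pnatr_eq0 -lt0n expn_gt0 b_gt0. Qed.

Let floor_natr (a : nat) : Num.floor (a%:R : rat) = a%:Z.
Proof. by rewrite -[a%:R]/((a%:Z)%:~R : rat) intrKfloor. Qed.

Lemma frac_in_adic_interval k d c a : (d <= k)%N ->
  (c%:R / (b ^ d)%:R <= a%:R / (b ^ k)%:R :> rat) &&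
  (a%:R / (b ^ k)%:R < c.+1%:R / (b ^ d)%:R :> rat) = (a %/ b ^ (k - d) == c)%N.
Proof.
move=> le_dk; have bkd_gt0 : (0 < b ^ (k - d))%N by rewrite expn_gt0 b_gt0.
have scale x : x%:R / (b ^ d)%:R = (x * b ^ (k - d))%:R / (b ^ k)%:R :> rat.
  by rewrite -(subnKC le_dk) expnD addKn !natrM; field; rewrite !expn_neq0.
have bk_gt0 : 0 < (b ^ k)%:R^-1 :> rat by rewrite invr_gt0 ltr0n expn_gt0 b_gt0.
rewrite !scale !ler_pM2r ?ltr_pM2r // ler_nat ltr_nat eqn_leq leq_divRL //.
by rewrite -[(a %/ _ <= c)%N]ltnS ltn_divLR // andbC.
Qed.

Lemma in_elem_interval_grid_pt k d1 d2 a1 a2 q : (d1 <= k)%N -> (d2 <= k)%N ->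
  in_elem_interval b d1 d2 a1 a2 (grid_pt b k q) = in_nat_box b k d1 d2 a1 a2 q.
Proof.
move=> le_d1k le_d2k; rewrite /in_elem_interval -andbA.
by rewrite frac_in_adic_interval // frac_in_adic_interval.
Qed.

Lemma in_unit_square_grid_pt k q :
  in_unit_square (grid_pt b k q) <-> (q.1 < b ^ k)%N /\ (q.2 < b ^ k)%N.
Proof.
have bk_gt0 : 0 < (b ^ k)%:R :> rat by rewrite ltr0n expn_gt0 b_gt0.
by rewrite /in_unit_square /= !divr_ge0 //= !ltr_pdivrMr // !mul1r !ltr_nat.
Qed.

Lemma is_net2_grid_ptE n Q : is_net2 b 0 n (map (grid_pt b n) Q) <-> nat_net b n Q.
Proof.
have boxE d1 d2 a1 a2 : (d1 + d2 = n)%N ->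
    count (in_elem_interval b d1 d2 a1 a2) (map (grid_pt b n) Q) =
    count (in_nat_box b n d1 d2 a1 a2) Q.
  move=> d12n; rewrite count_map; apply: eq_count => q /=.
  by rewrite in_elem_interval_grid_pt // -d12n ?leq_addr ?leq_addl.
rewrite /is_net2 size_map subn0 expn0; split.
- case=> _ [sizeQ [unitQ countQ]]; split=> // [q Qq|d1 d2 a1 a2 d12n].
    by apply/in_unit_square_grid_pt/unitQ/map_f.
  by rewrite -boxE //; apply: countQ.
case=> sizeQ boundQ countQ; split=> //; split=> //; split.
- by move=> p /mapP[q Qq ->]; apply/in_unit_square_grid_pt/boundQ.
- by move=> d1 d2 a1 a2 d12n lt_a1 lt_a2; rewrite boxE // countQ.
Qed.

Lemma in_QgridE n x : in_Qgrid b n x ->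
  x = (grid_index b n x)%:R / (b ^ n)%:R /\ (grid_index b n x < b ^ n)%N.
Proof.
by case=> a [lt_a ->]; rewrite /grid_index [(b ^ n)%:R * _]mulrC divfK // floor_natr.
Qed.

Lemma grid_coordsK n (P : seq point) :
  (forall p, p \in P -> in_Qgrid b n p.1 /\ in_Qgrid b n p.2) ->
  map (grid_pt b n) (map (grid_coords b n) P) = P.
Proof.
move=> gridP; rewrite -map_comp map_id_in // => -[x y] /gridP[/= gx gy].
by rewrite /comp /grid_pt /= -(in_QgridE gx).1 -(in_QgridE gy).1.
Qed.

Lemma psi_grid_pt n pi j q : (j < b)%N -> (q.1 < b ^ n)%N ->
  psi b n.+1 pi (((grid_pt b n q).1 + j%:R) / b%:R, (grid_pt b n q).2) =
  grid_pt b n.+1 (lift_pt n pi j q).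
Proof.
move=> lt_jb lt_q1; have b_neq0 : b%:R != 0 :> rat by rewrite pnatr_eq0 -lt0n.
rewrite /psi /grid_pt /= [(b ^ n)%:R * _]mulrC divfK // floor_natr.
have -> : Num.floor (b%:R * ((q.1%:R / (b ^ n)%:R + j%:R) / b%:R) : rat) = j%:Z.
  rewrite mulrC divfK //; apply: floor_def.
  rewrite -pmulrn -PoszD addn1 -!pmulrn lerDr divr_ge0 //= -natr1 addrC ltrD2l.
  by rewrite ltr_pdivrMr ?ltr0n ?expn_gt0 ?b_gt0 // mul1r ltr_nat.
by rewrite /= expnS !natrD !natrM; congr (_, _); field; rewrite expn_neq0 b_neq0.
Qed.

End Grid.

Theorem mainTheorem6 (b m : nat) (hb : (2 <= b)%N) (hm : (1 <= m)%N)
  (Ps : nat -> seq point) (pi : nat -> {perm 'I_b}) :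
  (forall j : nat, (j < b)%N ->
     is_net2 b 0 (m - 1) (Ps j) /\
     (forall p, p \in Ps j -> in_Qgrid b (m - 1) p.1 /\ in_Qgrid b (m - 1) p.2)) ->
  is_net2 b 0 m [seq psi b m pi p | p <- Phat b Ps].
Proof.
case: m hm => // n _ netPs; rewrite subn1 /= in netPs.
have b_gt0 : (0 < b)%N by apply: ltnW.
have [Q PsE netQ] : exists2 Q : nat -> seq (nat * nat),
    forall j, (j < b)%N -> Ps j = map (grid_pt b n) (Q j) &
    forall j, (j < b)%N -> nat_net b n (Q j).
  exists (fun j => map (grid_coords b n) (Ps j)) => j lt_jb; have [netP gridP] := netPs j lt_jb.
    by rewrite grid_coordsK.
  by rewrite -is_net2_grid_ptE // grid_coordsK.
suff -> : [seq psi b n.+1 pi p | p <- Phat b Ps] =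
    map (grid_pt b n.+1) (flatten [seq map (lift_pt n pi j) (Q j) | j <- iota 0 b]).
  by rewrite is_net2_grid_ptE //; apply: nat_net_lift.
rewrite /Phat !map_flatten -!map_comp; congr flatten; apply/eq_in_map => j.
rewrite mem_iota add0n => /= lt_jb; rewrite PsE // -!map_comp.
apply/eq_in_map => q Qq /=; have [_ boundQ _] := netQ j lt_jb.
exact: psi_grid_pt (boundQ q Qq).1.
Qed.
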